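(* Let $\mathbb{K}\in\{\mathbb{R},\mathbb{C}\}$, let $\mathcal{X}$ be a separable topological $\mathbb{K}$-vector space whose topological dual $\mathcal{X}^{\ast}$ separates the points of $\mathcal{X}$, and let $\mathcal{U}$ be a $0$-neighborhood in $\mathcal{X}$. Then every net $(U_j)_{j\in J}\subseteq\mathbf{CU}_{\mathcal{U}}(\mathcal{X}^{\ast})$ that converges in the weak*-Hausdorff hypertopology converges to $U_\infty=\mathrm{Li}_{j\in J}U_j=\mathrm{Ls}_{j\in J}U_j\in\mathbf{CU}_{\mathcal{U}}(\mathcal{X}^{\ast})$.
   Context: Topological vector spaces are Hausdorff. $\mathcal{X}^{\ast}$ carries the weak* topology. $\mathcal{U}^{\circ}=\{\sigma\in\mathcal{X}^{\ast}:|\sigma(A)|\le1\ \forall A\in\mathcal{U}\}$; $\mathbf{CU}_{\mathcal{U}}(\mathcal{X}^{\ast})$ is the set of nonempty convex weak*-closed subsets of $\mathcal{U}^{\circ}$. The weak*-Hausdorff hypertopology is generated by the extended pseudometrics $d_H^{(A)}(F,\tilde F)=\max\{\sup_{\sigma\in F}\inf_{\tilde\sigma\in\tilde F}|(\sigma-\tilde\sigma)(A)|,\ \sup_{\tilde\sigma\in\tilde F}\inf_{\sigma\in F}|(\sigma-\tilde\sigma)(A)|\}$, $A\in\mathcal{X}$. For a net $(F_j)_{j\in J}$ of subsets of $\mathcal{X}^{\ast}$: $\mathrm{Li}_{j\in J}F_j$ is the set of weak* limits of nets $(\sigma_j)_{j\in J}$ with $\sigma_j\in F_j$ for all $j\succ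 j_0$ for some $j_0$; $\mathrm{Ls}_{j\in J}F_j$ is the set of weak* limits of nets $(\sigma_i)_{i\in I}$ with $\sigma_i\in F_{s(i)}$ for some subnet $(F_{s(i)})_{i\in I}$. *)

From HB Require Import structures.
From mathcomp Require Import all_boot all_order all_algebra.
From mathcomp Require Import all_classical all_reals all_analysis.
From mathcomp.real_closed Require Import complex.

Set Implicit Arguments.
Unset Strict Implicit.
Unset Printing Implicit Defensive.

Import Order.TTheory GRing.Theory Num.Theory.
Import numFieldTopology.Exports.

Local Open Scope classical_set_scope.
Local Open Scope ring_scope.

Definition directed_by (J : Type) (le : J -> J -> Prop) : Prop :=
  [/\ exists j : J, True,
      (forall j, le j j),
      (forall i j k, le i j -> le j k -> le i k) &
      (forall i j, exists k, le i k /\ le j k)].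

(** The filter of "eventually" (tails) of a directed set. A net
    [x : J -> T] converges to [t] iff [x @ eventually_in le --> t]. *)
Definition eventually_in (J : Type) (le : J -> J -> Prop) : set_system J :=
  [set P | exists j0, forall j, le j0 j -> P j].

(** [s : I -> J] defines a subnet (in the sense of Willard):
    for every [j0] the net [s] is eventually above [j0]. *)
Definition subnet_map (I J : Type) (leI : I -> I -> Prop) (leJ : J -> J -> Prop)
  (s : I -> J) : Prop :=
  forall j0, exists i0, forall i, leI i0 i -> leJ j0 (s i).

Section Dual.
Variables (K : numFieldType) (X : topologicalLmodType K).

Definition dual : set (X -> K) :=
  [set s | (forall (a : K) (x y : X), s (a *: x + y) = a * s x + s y)
           /\ continuous s].

Definition wstar_lim (I : Type) (leI : I -> I -> Prop) (s : I -> X -> K)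
  (t : X -> K) : Prop :=
  dual t /\ {ptws, s @ eventually_in leI --> t}.

Definition wstar_closed (F : set (X -> K)) : Prop :=
  F `<=` dual /\
  exists C : set {ptws X -> K}, closed C /\ F = C `&` dual.

Definition polar (U : set X) : set (X -> K) :=
  [set s | dual s /\ forall A, U A -> `|s A| <= 1].

Definition convex_fun_set (F : set (X -> K)) : Prop :=
  forall s t (l : K), F s -> F t -> 0 <= l <= 1 ->
    F (fun A => l * s A + (1 - l) * t A).

Definition CU (U : set X) : set (set (X -> K)) :=
  [set F | [/\ F !=set0, convex_fun_set F, wstar_closed F & F `<=` polar U]].

(** [hdist_le A F G e] means  d_H^(A)(F, G) <= e, i.e.
    sup_{s in F} inf_{t in G} |(s - t)(A)| <= e and symmetrically,
    with sup and inf written out (inf <= e iff for every e' > e some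
    element is < e'; sup <= e iff every element is <= e). *)
Definition hdist_le (A : X) (F G : set (X -> K)) (e : K) : Prop :=
  (forall s, F s -> forall e', e < e' -> exists2 t, G t & `|(s - t) A| < e') /\
  (forall t, G t -> forall e', e < e' -> exists2 s, F s & `|(s - t) A| < e').

(** Convergence of a net of subsets of X^star to [F] in the weakstar-Hausdorff
    hypertopology, i.e. the topology generated by the extended
    pseudometrics d_H^(A), A in X: d_H^(A)(F_j, F) -> 0 for every A. *)
Definition wH_lim (J : Type) (le : J -> J -> Prop) (Fs : J -> set (X -> K))
  (F : set (X -> K)) : Prop :=
  forall (A : X) (e : K), 0 < e -> eventually_in le (fun j => hdist_le A (Fs j) F e).

Definition Li (J : Type) (le : J -> J -> Prop) (Fs : J -> set (X -> K)) :
  set (X -> K) :=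
  [set t | exists s : J -> X -> K,
     eventually_in le (fun j => Fs j (s j)) /\ wstar_lim le s t].

Definition Ls (J : Type) (le : J -> J -> Prop) (Fs : J -> set (X -> K)) :
  set (X -> K) :=
  [set t | exists (I : Type) (leI : I -> I -> Prop) (sub : I -> J)
                  (s : I -> X -> K),
     [/\ directed_by leI, subnet_map leI le sub,
         (forall i, Fs (sub i) (s i)) & wstar_lim leI s t]].

End Dual.

From HB Require Import structures.
From mathcomp Require Import all_boot all_order all_algebra.
From mathcomp Require Import all_classical all_reals all_analysis.
From mathcomp.real_closed Require Import complex.
From mathcomp Require Import ring lra.

Set Implicit Arguments.
Unset Strict Implicit.
Unset Printing Implicit Defensive.

Import Order.TTheory GRing.Theory Num.Theory.
Import numFieldTopology.Exports.
Import numFieldNormedType.Exports.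

Local Open Scope classical_set_scope.
Local Open Scope ring_scope.

(** Let F be the limit of the net.  We show Ls ⊆ F ⊆ Li ⊆ Ls.  The pseudometric
    d_H^(A) only controls one point A at a time; convexity upgrades this to
    control on finitely many points at once: in K^n, a bounded convex set that
    comes close to 0 along each of finitely many fixed functionals contains a
    point close to 0.  (Take an almost norm-minimizing point a of the set; if a
    were not small, the functional <a, .> would stay away from 0 on the whole
    set.)  With F weak*-closed this gives Ls ⊆ F.  For F ⊆ Li we use that the
    polar U° is equicontinuous, so on U° weak* convergence is convergence on a
    dense sequence e_0, e_1, ...: for each j pick s_j in U_j that is
    1/(n+1)-close to t on e_0, ..., e_(n-1) for the largest attainable n, or
    s_j = t, which lies in the closed set U_j when every n is attainable. *)

Definition pointwise_convex (K : numFieldType) (I : Type) (C : set (I -> K)) : Prop :=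
  forall u v (l : K), C u -> C v -> 0 <= l <= 1 -> C (fun k => l * u k + (1 - l) * v k).

Section RealConvexSeparation.
Variable R : realType.

Lemma near_minimizer (T : Type) (C : set T) (f : T -> R) (d : R) :
  C !=set0 -> (forall c, C c -> 0 <= f c) -> 0 < d ->
  exists2 a, C a & forall c, C c -> f a - d < f c.
Proof.
move=> [c0 Cc0] f_ge0 d0.
have infE : has_inf (f @` C).
  by split; [exists (f c0), c0 | exists 0 => _ [c Cc <-]; exact: f_ge0].
have [_ [a Ca <-] fa_lt] := inf_adherent d0 infE.
exists a => // c Cc; rewrite ltrBlDr; apply: lt_le_trans fa_lt _.
by rewrite lerD2r; apply: ge_inf infE.2 _ _; exists c.
Qed.

Lemma interval_net (d : R) : 0 < d -> exists (m : nat) (g : 'I_m -> R),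
  forall z, `|z| <= 1 -> exists i, `|z - g i| < d.
Proof.
move=> d0; set N := Num.truncn d^-1; set h : R := N.+1%:R^-1.
have h0 : 0 < h by rewrite invr_gt0.
have hd : h < d by rewrite -[d]invrK ltf_pV2 ?posrE ?invr_gt0 ?truncnS_gt.
exists (2 * N.+1).+1, (fun i => i%:R * h - 1) => z /[!ler_norml] /andP[z_ge z_le].
set w := (z + 1) * N.+1%:R.
have w0 : 0 <= w by rewrite mulr_ge0 //; lra.
have /andP[iw wi] := truncn_itv w0.
have im : (Num.truncn w < (2 * N.+1).+1)%N.
  rewrite ltnS -(ler_nat R) natrM; apply: le_trans iw _.
  by rewrite ler_wpM2r //; lra.
exists (Ordinal im) => /=.
have -> : z - ((Num.truncn w)%:R * h - 1) = (w - (Num.truncn w)%:R) * h.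
  by rewrite /w /h; field.
rewrite ger0_norm ?mulr_ge0 ?subr_ge0 ?(ltW h0) //.
by apply: le_lt_trans hd; rewrite ler_piMl ?(ltW h0) //; lra.
Qed.

Variable I : finType.
Implicit Types (u v c : I -> R) (C : set (I -> R)).

Definition dotv u v := \sum_k u k * v k.

Lemma dotv_ge0 u : 0 <= dotv u u.
Proof. by apply: sumr_ge0 => k _; rewrite -expr2 sqr_ge0. Qed.

Lemma sqr_le_dotv u k (e : R) : 0 <= e -> e <= `|u k| -> e ^+ 2 <= dotv u u.
Proof.
move=> e0 euk; rewrite /dotv (bigD1 k) //= -expr2 -(real_normK (num_real (u k))) -[e ^+ 2]addr0.
apply: lerD; first by rewrite lerXn2r ?nnegrE ?normr_ge0.
by apply: sumr_ge0 => i _; rewrite -expr2 sqr_ge0.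
Qed.

Lemma dotv_split u v : dotv u v = dotv u u + dotv u (fun k => v k - u k).
Proof. by rewrite /dotv -big_split; apply: eq_bigr => k _ /=; ring. Qed.

Lemma dotv_segment u v (l : R) (w := fun k => l * v k + (1 - l) * u k) :
  dotv w w = dotv u u + 2 * l * dotv u (fun k => v k - u k)
             + l ^+ 2 * dotv (fun k => v k - u k) (fun k => v k - u k).
Proof. by rewrite /w /dotv !mulr_sumr -!big_split; apply: eq_bigr => k _ /=; ring. Qed.

Lemma dotv_lipschitz u v c (d M : R) : (forall k, `|u k - v k| <= d) ->
  (forall k, `|c k| <= M) -> `|dotv u c - dotv v c| <= (d * M) *+ #|I|.
Proof.
move=> uv cM; rewrite /dotv -sumrB -sumr_const.
apply: le_trans (ler_norm_sum _ _ _) _; apply: ler_sum => k _.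
by rewrite -mulrBl normrM ler_pM.
Qed.

(* The variational inequality at an almost minimizer [a] of the squared norm
   on [C], along the segment from [a] to [c]. *)
Lemma convex_separation C (M e : R) : 0 < e -> C !=set0 -> pointwise_convex C ->
  (forall u k, C u -> `|u k| <= M) -> (forall u, C u -> e <= dotv u u) ->
  exists2 a, C a & forall c, C c -> e / 2 < dotv a c.
Proof.
move=> e0 C0 Cconv CM Ce.
set B := (2 * M) ^+ 2 *+ #|I|.
have B0 : 0 <= B by rewrite mulrn_wge0 ?sqr_ge0.
have dist_le u v : C u -> C v -> dotv (fun k => v k - u k) (fun k => v k - u k) <= B.
  move=> Cu Cv; rewrite /B -sumr_const /dotv; apply: ler_sum => k _.
  rewrite -expr2 -real_normK ?num_real //.
  have := ler_normB (v k) (u k); have := CM _ k Cu; have := CM _ k Cv.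
  have := normr_ge0 (v k - u k); nra.
set lam := e / (e + 4 * B).
have lam0 : 0 < lam by rewrite divr_gt0 // ltr_wpDr // mulr_ge0.
have lam1 : lam <= 1.
  by rewrite ler_pdivrMr ?mul1r ?lerDl ?mulr_ge0 // ltr_wpDr // mulr_ge0.
have lamB : lam * B <= e / 4.
  rewrite /lam mulrAC ler_pdivrMr ?ltr_wpDr ?mulr_ge0 //.
  by rewrite -mulrA ler_pM2l // mulrDr; nra.
have [a Ca amin] := near_minimizer C0 (fun c _ => dotv_ge0 c)
  (mulr_gt0 lam0 (divr_gt0 e0 (ltr0n R 2))).
exists a => // c Cc.
set P := dotv a (fun k => c k - a k).
set D := dotv (fun k => c k - a k) (fun k => c k - a k).
have := amin _ (Cconv _ _ lam Cc Ca _).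
rewrite ?(ltW lam0) ?lam1 // dotv_segment -/P -/D => amin_c.
have lamD : lam ^+ 2 * D <= lam * (e / 4).
  by rewrite expr2 -mulrA ler_pM2l // (le_trans _ lamB) // ler_pM2l // dist_le.
have P_gt : 0 < lam * (2 * P + 3 * e / 4) by move: amin_c lamD; rewrite -/lam; lra.
rewrite (dotv_split a c) -/P; have := Ce a Ca; move: P_gt; rewrite pmulr_rgt0 //; lra.
Qed.

Lemma cube_net (d : R) : 0 < d -> exists (J : finType) (W : J -> I -> R),
  forall w, (forall k, `|w k| <= 1) -> exists j, forall k, `|w k - W j k| < d.
Proof.
move=> d0; have [m [g gnet]] := interval_net d0.
exists {ffun I -> 'I_m}, (fun (f : {ffun I -> 'I_m}) k => g (f k)) => w w1.
have [f fP] := fin_all_exists (fun k => gnet _ (w1 k)).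
by exists [ffun k => f k] => k; rewrite ffunE.
Qed.

End RealConvexSeparation.

(* A quantitative Hahn-Banach property of [K^I]: the test functionals [W j]
   depend only on [I], the bound [M] and the tolerance [eps]. *)
Definition convex_approximation (K : numFieldType) : Prop :=
  forall (I : finType) (M eps : K), 0 < eps ->
  exists2 eta : K, 0 < eta & exists (J : finType) (W : J -> I -> K),
  forall C : set (I -> K), C !=set0 -> pointwise_convex C ->
    (forall u k, C u -> `|u k| <= M) ->
    (forall j, exists2 u, C u & `|\sum_k W j k * u k| < eta) ->
    exists2 u, C u & forall k, `|u k| < eps.

Lemma convex_approximation_real (R : realType) : convex_approximation R.
Proof.
move=> I M eps eps0; set e := eps ^+ 2; set M' : R := `|M| + 1.
have e0 : 0 < e by rewrite exprn_gt0.
have M'0 : 0 < M' by rewrite ltr_wpDl.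
set d := e / (4 * M' ^+ 2 * #|I|.+1%:R).
have d0 : 0 < d by rewrite divr_gt0 // !mulr_gt0 // exprn_gt0.
have [J [W Wnet]] := cube_net I d0.
exists (e / (4 * M')); first by rewrite divr_gt0 // mulr_gt0.
exists J, W => C C0 Cconv CM Wsmall; apply: contrapT => no_small.
have Ce u : C u -> e <= dotv u u.
  move=> Cu; have [k epsk] : exists k, eps <= `|u k|.
    apply: contrapT => all_small; apply: no_small; exists u => // k.
    by rewrite ltNge; apply/negP => epsk; apply: all_small; exists k.
  exact: sqr_le_dotv (ltW eps0) epsk.
have [a Ca sep] := convex_separation e0 C0 Cconv CM Ce.
(* The test functional closest to [a / M'] stays above [eta] on [C]. *)
have aM' k : `|a k / M'| <= 1.
  rewrite normrM normfV (gtr0_norm M'0) ler_pdivrMr // mul1r.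
  by apply: le_trans (CM _ k Ca) _; rewrite ler_wpDr // ler_norm.
have [j Wj] := Wnet _ aM'.
have [c Cc c_small] := Wsmall j.
have cM' k : `|c k| <= M' by apply: le_trans (CM _ k Cc) _; rewrite ler_wpDr // ler_norm.
have := dotv_lipschitz (fun k => ltW (Wj k)) cM'.
have -> : dotv (fun k => a k / M') c = dotv a c / M'.
  by rewrite /dotv mulr_suml; apply: eq_bigr => k _; rewrite mulrAC.
have err : (d * M') *+ #|I| <= e / (4 * M').
  rewrite -mulr_natr (_ : _ * _ = e / (4 * M') * (#|I|%:R / #|I|.+1%:R)); last first.
    by rewrite /d; field; rewrite ?pnatr_eq0 ?gt_eqF.
  apply: ler_piMr; first by rewrite divr_ge0 // ltW // mulr_gt0.
  by rewrite ler_pdivrMr ?ltr0n // mul1r ler_nat.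
have ac : e / 2 / M' < dotv a c / M' by rewrite ltr_pM2r ?invr_gt0 ?sep.
have e2 : e / 2 / M' = 2 * (e / (4 * M')) by field; rewrite gt_eqF.
move: c_small; rewrite -/(dotv (W j) c) => c_small.
have := ler_norm (dotv a c / M' - dotv (W j) c); have := ler_norm (dotv (W j) c).
move: ac c_small err; rewrite e2; lra.
Qed.

Section ComplexConvexApproximation.
Variable R : realType.
Local Open Scope complex_scope.
Implicit Types (z : R[i]).

Definition reim (b : bool) z : R := if b then complex.Re z else complex.Im z.

Lemma reim_combination b (k h : R) (x y : R[i]) :
  reim b (k%:C * x + h%:C * y) = k * reim b x + h * reim b y.
Proof. by case: b; case: x => ? ?; case: y => ? ? /=; simpc. Qed.

Lemma Re0 : complex.Re (0 : R[i]) = 0. Proof. by []. Qed.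

Lemma ReD (x y : R[i]) : complex.Re (x + y) = complex.Re x + complex.Re y.
Proof. by case: x => ? ?; case: y => ? ?. Qed.

Lemma normc_real (k : R) : `|k%:C| = `|k|%:C.
Proof. by rewrite normc_def /= expr0n addr0 sqrtr_sqr. Qed.

Lemma normc_reim b z : `|reim b z|%:C <= `|z|.
Proof.
rewrite normc_def lecR -sqrtr_sqr ler_wsqrtr //.
by case: b => /=; rewrite ?lerDl ?lerDr sqr_ge0.
Qed.

Lemma normc_le_reim z : `|z| <= `|complex.Re z|%:C + `|complex.Im z|%:C.
Proof.
rewrite {1}[z]complexE -!normc_real; apply: le_trans (ler_normD _ _) _.
have normi : `|'i| = 1 :> R[i] by rewrite normc_def /= expr0n expr1n add0r sqrtr1.
by rewrite normrM normi mul1r.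
Qed.

Lemma Re_sum (I : finType) (F : I -> R[i]) :
  complex.Re (\sum_k F k) = \sum_k complex.Re (F k).
Proof. exact: (big_morph _ ReD Re0). Qed.

Lemma Re_weighted_sum (I : finType) (W : bool * I -> R) (u : I -> R[i]) :
  complex.Re (\sum_k (W (true, k) +i* - W (false, k)) * u k) =
  \sum_(p : bool * I) W p * reim p.1 (u p.2).
Proof.
rewrite Re_sum [RHS](eq_bigr (fun p => W (p.1, p.2) * reim p.1 (u p.2))) => [|[] //].
rewrite -(pair_bigA _ (fun b i => W (b, i) * reim b (u i))) big_bool -big_split.
by apply: eq_bigr => i _ /=; case: (u i) => a b; simpc.
Qed.

Lemma convex_approximation_complex : convex_approximation R[i].
Proof.
move=> I M [e ie]; rewrite ltcE /= => /andP[/eqP -> e0].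
have [eta eta0 [J [W Wsmall]]] := @convex_approximation_real R (bool * I)%type
  (complex.Re M) (e / 2) (divr_gt0 e0 (ltr0n R 2)).
exists eta%:C; first by rewrite ltcR.
exists J, (fun j k => W j (true, k) +i* - W j (false, k)) => C C0 Cconv CM Csmall.
(* Work with real and imaginary parts: [Re ((p - i q) z) = p Re z + q Im z], so
   every real test functional is the real part of a complex one. *)
pose C' := [set (fun p : bool * I => reim p.1 (u p.2)) | u in C].
have C'0 : C' !=set0 by case: C0 => u Cu; exists (fun p => reim p.1 (u p.2)), u.
have C'conv : pointwise_convex C'.
  move=> _ _ l [u Cu <-] [v Cv <-] /andP[l0 l1].
  exists (fun k => l%:C * u k + (1 - l)%:C * v k).
    rewrite rmorphB rmorph1; apply: Cconv => //.
    by rewrite ler0c l0 -(rmorph1 (real_complex R)) lecR.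
  by apply: funext => p; rewrite reim_combination.
have C'M u' p : C' u' -> `|u' p| <= complex.Re M.
  case: p => b k [u Cu <-]; have := le_trans (normc_reim b (u k)) (CM u k Cu).
  by rewrite lecE => /andP[_].
have C'small j : exists2 u', C' u' & `|\sum_p W j p * u' p| < eta.
  have [u Cu u_small] := Csmall j; exists (fun p => reim p.1 (u p.2)); first by exists u.
  rewrite -Re_weighted_sum -ltcR; apply: le_lt_trans u_small.
  exact: normc_reim true _.
have [_ [u Cu <-] u_small] := Wsmall C' C'0 C'conv C'M C'small.
exists u => // k; apply: le_lt_trans (normc_le_reim _) _.
rewrite -rmorphD ltcR [e](splitr e).
by apply: ltrD; [exact: (u_small (true, k)) | exact: (u_small (false, k))].
Qed.

Lemma archimedean_complex : Num.archimedean_axiom R[i].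
Proof.
move=> z; rewrite normc_def; set r := Num.sqrt _.
exists (Num.bound r); rewrite -(rmorph_nat (real_complex R)) ltcR.
by apply: archi_boundP; rewrite sqrtr_ge0.
Qed.

End ComplexConvexApproximation.

Lemma eventually_in_filter (J : Type) (le : J -> J -> Prop) :
  directed_by le -> ProperFilter (eventually_in le).
Proof.
move=> [[j0 _] le_refl le_trans le_dir].
apply: Build_ProperFilter_ex => [P [j jP]|]; first by exists j; apply: jP.
split; first by exists j0.
- move=> P Q [i iP] [j jQ]; have [k [ik jk]] := le_dir i j.
  by exists k => l kl; split; [apply: iP; apply: le_trans kl|apply: jQ; apply: le_trans kl].
- by move=> P Q PQ [j jP]; exists j => i /jP /PQ.
Qed.

Lemma separable_dense_seq (T : topologicalType) (x0 : T) :
  (exists D : set T, countable D /\ dense D) -> exists e : nat -> T, dense (range e).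
Proof.
move=> [D [/countable_injP [f finj] Ddense]].
exists ('pinv_(fun=> x0) D f) => O O0 Oopen.
have [x [Ox Dx]] := Ddense O O0 Oopen.
by exists x; split => //; exists (f x) => //; rewrite pinvKV // inE.
Qed.

Lemma archimedean_inv_lt (K : numFieldType) (e : K) :
  Num.archimedean_axiom K -> 0 < e -> \forall n \near \oo, n.+1%:R^-1 < e.
Proof.
move=> Karchi e0; have [N eN] := Karchi e^-1.
exists N => // n /= Nn; rewrite -[e]invrK ltf_pV2 ?posrE ?invr_gt0 //.
apply: lt_trans (_ : N%:R < n.+1%:R); last by rewrite ltr_nat ltnS.
by rewrite -[e^-1]gtr0_norm ?invr_gt0.
Qed.

Section WeakStar.
Variables (K : numFieldType) (X : topologicalLmodType K).
Implicit Types (s t : X -> K) (U : set X) (F G : set (X -> K)).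

Section DualFunctional.
Variable s : X -> K.
Hypothesis ds : dual s.

Lemma dual0 : s 0 = 0.
Proof.
have := ds.1 1 0 0; rewrite scale1r addr0 mul1r => s00.
by apply: (addrI (s 0)); rewrite -s00 addr0.
Qed.

Lemma dualZ a x : s (a *: x) = a * s x.
Proof. by have := ds.1 a x 0; rewrite !addr0 dual0 addr0. Qed.

Lemma dualD x y : s (x + y) = s x + s y.
Proof. by have := ds.1 1 x y; rewrite scale1r mul1r. Qed.

Lemma dualB x y : s (x - y) = s x - s y.
Proof. by rewrite -scaleN1r dualD dualZ mulN1r. Qed.

Lemma dual_sum (I : finType) (A : I -> X) : s (\sum_k A k) = \sum_k s (A k).
Proof. exact: (big_morph s dualD dual0). Qed.

End DualFunctional.

Lemma scale_vector_continuous (x : X) : continuous (fun r : K^o => r *: x).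
Proof.
move=> r; apply: (continuous_comp (f := fun r : K^o => (r, x))
                                  (g := fun z : K^o * X => z.1 *: z.2)).
  have := @cvg_pair _ _ _ (nbhs r) (nbhs r) (nbhs x) _ _ _ id (fun _ => x) cvg_id (cvg_cst x).
  exact.
exact: scale_continuous.
Qed.

Lemma scale_subl_continuous (a : K) (x : X) : continuous (fun y : X => a *: (x - y)).
Proof.
move=> y; apply: (continuous_comp (f := fun y => (a : K^o, x - y))
                                  (g := fun z : K^o * X => z.1 *: z.2)); last first.
  exact: scale_continuous.
apply: (cvg_pair (cvg_cst _)).
apply: (continuous_comp (f := fun y => (x, y)) (g := fun z : X * X => z.1 - z.2)).
  have := @cvg_pair _ _ _ (nbhs y) (nbhs x) (nbhs y) _ _ _ (fun _ => x) id (cvg_cst x) cvg_id.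
  exact.
exact: sub_continuous.
Qed.

Lemma polar_bounded U x : nbhs 0 U ->
  exists2 M, 0 <= M & forall s, polar U s -> `|s x| <= M.
Proof.
move=> U0.
have scale_x : (fun r : K^o => r *: x) @ (0 : K^o) --> (0 : X).
  by rewrite -[X in _ --> X](scale0r x); exact: scale_vector_continuous.
have /nbhs_normP [r /= r0 rU] := scale_x U U0.
exists (2 / r) => [|s [ds sU]]; first by rewrite divr_ge0 // ltW.
have r20 : 0 < r / 2 by rewrite divr_gt0.
have Urx : U ((r / 2) *: x).
  by apply: rU; rewrite /= sub0r normrN gtr0_norm // ltr_pdivrMr // ltr_pMr // ltr1n.
have := sU _ Urx; rewrite dualZ // normrM gtr0_norm // => rsx.
rewrite ler_pdivlMr // (_ : _ * r = 2 * (r / 2 * `|s x|)); last by field.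
exact: ler_piMr.
Qed.

Lemma polar_approx U t (I : finType) (A : I -> X) (eps : K) :
  convex_approximation K -> nbhs 0 U -> dual t -> 0 < eps ->
  exists2 eta, 0 < eta & exists (J : finType) (B : J -> X),
  forall G, G !=set0 -> convex_fun_set G -> G `<=` polar U ->
    (forall j, exists2 g, G g & `|g (B j) - t (B j)| < eta) ->
    exists2 g, G g & forall k, `|g (A k) - t (A k)| < eps.
Proof.
move=> Kapprox U0 dt eps0.
have /choice [M polarM] : forall k, exists M, 0 <= M /\ forall s, polar U s -> `|s (A k)| <= M.
  by move=> k; have [M M0 polarM] := polar_bounded (A k) U0; exists M.
have [eta eta0 [J [W Wsmall]]] :=
  Kapprox I (\sum_k (M k + `|t (A k)|)) eps eps0.
exists eta => //; exists J, (fun j => \sum_k W j k *: A k).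
move=> G G0 Gconv Gpolar Gsmall.
pose D := [set (fun k => g (A k) - t (A k)) | g in G].
have D0 : D !=set0 by case: G0 => g Gg; exists (fun k => g (A k) - t (A k)), g.
have Dconv : pointwise_convex D.
  move=> _ _ l [g Gg <-] [h Gh <-] l01.
  exists (fun x => l * g x + (1 - l) * h x); first exact: Gconv.
  by apply: funext => k /=; ring.
have DM u k : D u -> `|u k| <= \sum_k (M k + `|t (A k)|).
  move=> [g Gg <-]; rewrite (bigD1 k) //= -[leLHS]addr0.
  apply: lerD; last by apply: sumr_ge0 => i _; rewrite addr_ge0 ?(polarM i).1.
  apply: le_trans (ler_normB _ _) (lerD _ (lexx _)).
  exact: (polarM k).2 _ (Gpolar g Gg).
have Dsmall j : exists2 u, D u & `|\sum_k W j k * u k| < eta.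
  have [g Gg gsmall] := Gsmall j; exists (fun k => g (A k) - t (A k)); first by exists g.
  have dg := (Gpolar g Gg).1.
  by rewrite !dual_sum // -sumrB in gsmall; under eq_bigr do rewrite mulrBr -dualZ // -(dualZ dt).
have [_ [g Gg <-] gsmall] := Wsmall D D0 Dconv DM Dsmall.
by exists g.
Qed.

Lemma wstar_closed_approx G t : wstar_closed G -> dual t ->
  (forall (As : seq X) (e : K), 0 < e ->
     exists2 g, G g & forall A, A \in As -> `|g A - t A| < e) -> G t.
Proof.
move=> [_ [C [Ccl ->]]] dt Gapprox; split => //.
pose near_t (p : seq X * K) :=
  [set g | (C `&` @dual K X) g /\ forall A, A \in p.1 -> `|g A - t A| < p.2].
have Fnear : Filter (filter_from [set p : seq X * K | 0 < p.2] near_t).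
  apply: filter_from_filter; first by exists ([::], 1); rewrite /= ltr01.
  move=> [As1 e1] [As2 e2] /= e10 e20.
  have [e e0 [ee1 ee2]] : exists2 e, 0 < e & e <= e1 /\ e <= e2.
    by case/orP: (real_leVge (gtr0_real e10) (gtr0_real e20)) => ?; [exists e1|exists e2].
  exists (As1 ++ As2, e) => // g [Gg gAs]; split; split => // A AAs;
    by apply: lt_le_trans (gAs A _) _; rewrite ?mem_cat ?AAs ?orbT.
have : ProperFilter (filter_from [set p : seq X * K | 0 < p.2] near_t).
  apply: filter_from_proper => -[As e] /= e0.
  by have [g Gg gAs] := Gapprox As e e0; exists g.
move=> PFnear.
have near_t_lim : {ptws, filter_from [set p : seq X * K | 0 < p.2] near_t --> t}.
  apply/(pointwise_cvgP _ _) => x; apply/cvgrPdist_lt => e e0.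
  by exists ([:: x], e) => //= g [_ gx]; rewrite distrC gx ?mem_seq1.
apply: (@closed_cvg _ {ptws X -> K} _ PFnear id C Ccl _ t near_t_lim).
by exists ([::], 1); rewrite /= ?ltr01 // => g [[]].
Qed.

Definition close_on (e : nat -> X) (n : nat) s t :=
  forall k, (k < n)%N -> `|s (e k) - t (e k)| < n.+1%:R^-1.

Lemma close_on_mono e m n s t : (m <= n)%N -> close_on e n s t -> close_on e m s t.
Proof.
move=> mn close k km; apply: lt_le_trans (close k (leq_trans km mn)) _.
by rewrite lef_pV2 ?posrE ?ltr0Sn // ler_nat.
Qed.

Lemma polar_close_on_dense U e x (eps : K) : Num.archimedean_axiom K ->
  nbhs 0 U -> dense (range e) -> 0 < eps ->
  \forall n \near \oo, forall s t,
    polar U s -> polar U t -> close_on e n s t -> `|s x - t x| < eps.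
Proof.
move=> Karchi U0 edense eps0; set rho := eps / 3.
have rho0 : 0 < rho by rewrite divr_gt0.
have near_x : \forall y \near x, U (rho^-1 *: (x - y)).
  suff : (fun y => rho^-1 *: (x - y)) @ x --> (0 : X) by apply.
  by rewrite -(scaler0 _ rho^-1) -(subrr x); exact: scale_subl_continuous.
have [y [near_y [k _ eky]]] : [set y | \near y, U (rho^-1 *: (x - y))] `&` range e !=set0.
  by apply: edense; [exists x | exact: open_interior].
have Uk : U (rho^-1 *: (x - e k)) by rewrite eky; exact: nbhs_singleton near_y.
have polar_small s : polar U s -> `|s (x - e k)| <= rho.
  move=> [ds sU]; have := sU _ Uk; rewrite dualZ // normrM gtr0_norm ?invr_gt0 //.
  by rewrite ler_pdivrMl // mulr1.
near=> n => s t ps pt close.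
have -> : s x - t x = (s (e k) - t (e k)) + (s (x - e k) - t (x - e k)).
  by rewrite (dualB ps.1) (dualB pt.1); ring.
have kn : (k < n)%N by near: n; exists k.+1.
have n_rho : n.+1%:R^-1 < rho by near: n; exact: archimedean_inv_lt.
have eps3 : eps = rho + (rho + rho) by rewrite /rho; field.
rewrite eps3; apply: le_lt_trans (ler_normD _ _) (ltr_leD (lt_trans (close k kn) n_rho) _).
exact: le_trans (ler_normB _ _) (lerD (polar_small s ps) (polar_small t pt)).
Unshelve. all: by end_near.
Qed.

Lemma Li_sub_Ls (J : Type) (le : J -> J -> Prop) (Fs : J -> set (X -> K)) :
  directed_by le -> (forall j, Fs j !=set0) -> Li le Fs `<=` Ls le Fs.
Proof.
move=> Jdir Fs0 t [s [[j0 sFs] [dt s_t]]].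
have JF := eventually_in_filter Jdir.
have /choice [r Fsr] := Fs0.
pose s' j := if pselect (Fs j (s j)) is left _ then s j else r j.
exists J, le, id, s'; split => //.
- by move=> j; exists j.
- by move=> j; rewrite /s'; case: pselect.
- split => //; apply: cvg_trans s_t; apply: near_eq_cvg.
  by exists j0 => j /sFs Fsj; rewrite /s'; case: pselect.
Qed.

Lemma Ls_sub_wH_lim U (J : Type) (le : J -> J -> Prop) (Fs : J -> set (X -> K)) F :
  convex_approximation K -> nbhs 0 U -> CU U F -> wH_lim le Fs F -> Ls le Fs `<=` F.
Proof.
move=> Kapprox U0 [F0 Fconv Fcl Fpolar] FsF t [I [leI [sub [s [Idir subnet sFs [dt s_t]]]]]].
have IF := eventually_in_filter Idir.
have s_t_at B e : 0 < e -> eventually_in leI (fun i => `|s i B - t B| < e).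
  move=> e0; move/(pointwise_cvgP _ _): s_t => /(_ B) /cvgrPdist_lt /(_ e e0).
  by move=> [i0 i0P]; exists i0 => i /i0P /=; rewrite distrC.
apply: (wstar_closed_approx Fcl dt) => As e e0.
have [eta eta0 [J' [B Bsmall]]] :=
  polar_approx (fun k : 'I_(size As) => nth 0 As k) Kapprox U0 dt e0.
suff F_near_t j : exists2 f, F f & `|f (B j) - t (B j)| < eta.
  have [g Fg g_close] := Bsmall F F0 Fconv Fpolar F_near_t.
  by exists g => // A /(nthP 0) [k ks <-]; exact: (g_close (Ordinal ks)).
have eta2 : 0 < eta / 2 by rewrite divr_gt0.
have eta42 : eta / 4 < eta / 2 by rewrite ltr_pM2l // ltf_pV2 ?posrE // ltr_nat.
have [j0 Fs_near] := FsF (B j) (eta / 4) (divr_gt0 eta0 (ltr0n _ 4)).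
have [i [s_close i_sub]] := filter_ex (filterI (s_t_at (B j) _ eta2) (subnet j0)).
have [f Ff sf] := (Fs_near _ i_sub).1 (s i) (sFs i) _ eta42.
have {}sf : `|s i (B j) - f (B j)| < eta / 2 := sf.
exists f => //; have -> : f (B j) - t (B j) = (s i (B j) - t (B j)) - (s i (B j) - f (B j)).
  by ring.
by apply: le_lt_trans (ler_normB _ _) _; rewrite [eta](splitr eta) ltrD.
Qed.

Lemma wH_lim_close_on U (J : Type) (le : J -> J -> Prop) (Fs : J -> set (X -> K)) F e t n :
  convex_approximation K -> nbhs 0 U -> directed_by le -> (forall j, CU U (Fs j)) ->
  wH_lim le Fs F -> F t -> dual t ->
  eventually_in le (fun j => exists2 s, Fs j s & close_on e n s t).
Proof.
move=> Kapprox U0 Jdir FsCU FsF Ft dt.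
have JF := eventually_in_filter Jdir.
have n0 : 0 < n.+1%:R^-1 :> K by rewrite invr_gt0.
have [eta eta0 [J' [B Bsmall]]] := polar_approx (fun k : 'I_n => e k) Kapprox U0 dt n0.
have : \forall j \near eventually_in le, forall i,
    exists2 s, Fs j s & `|s (B i) - t (B i)| < eta.
  apply: filter_forall => i.
  have eta2 : eta / 2 < eta by rewrite ltr_pdivrMr // ltr_pMr // ltr1n.
  have [j0 j0P] := FsF (B i) (eta / 2) (divr_gt0 eta0 (ltr0n _ 2)).
  by exists j0 => j /j0P [_ FsjF]; have [s Fsjs st] := FsjF t Ft eta eta2; exists s.
apply: filterS => j Bj; have [Fsj0 Fsjconv _ Fsjpolar] := FsCU j.
have [s Fsjs s_close] := Bsmall (Fs j) Fsj0 Fsjconv Fsjpolar Bj.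
by exists s => // k kn; exact: (s_close (Ordinal kn)).
Qed.

Lemma close_on_select U G e t : Num.archimedean_axiom K -> nbhs 0 U -> dense (range e) ->
  G !=set0 -> wstar_closed G -> G `<=` polar U -> polar U t ->
  exists s, G s /\ forall n, (exists2 s', G s' & close_on e n s' t) -> close_on e n s t.
Proof.
move=> Karchi U0 edense [s0 Gs0] Gcl Gpolar pt.
pose P n := exists2 s, G s & close_on e n s t.
have [Pall|/existsNP [n notPn]] := pselect (forall n, P n).
  exists t; split; last by move=> n _ k _; rewrite subrr normr0 invr_gt0.
  apply: (wstar_closed_approx Gcl pt.1) => As eps eps0.
  have : \forall n \near \oo, forall A : seq_sub As, forall s,
      polar U s -> close_on e n s t -> `|s (val A) - t (val A)| < eps.
    apply: filter_forall => A.
    apply: filterS (polar_close_on_dense (val A) Karchi U0 edense eps0).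
    by move=> n close_n s ps; exact: close_n s t ps pt.
  move=> [N _ NP]; have [s Gs sN] := Pall N.
  by exists s => // A AAs; exact: (NP N (leqnn N) (SeqSub AAs) s (Gpolar s Gs) sN).
have [m [Pm notPm1]] : exists m, P m /\ ~ P m.+1.
  elim: n notPn => [|k IH notPk1]; first by case; exists s0 => // k.
  by have [Pk|/IH //] := pselect (P k); exists k; split.
have [s Gs sm] := Pm; exists s; split => // l [s' Gs' s'l]; apply: close_on_mono sm.
rewrite leqNgt; apply/negP => ml; apply: notPm1; exists s' => //.
exact: close_on_mono s'l.
Qed.

Lemma wH_lim_sub_Li U (J : Type) (le : J -> J -> Prop) (Fs : J -> set (X -> K)) F :
  convex_approximation K -> Num.archimedean_axiom K ->
  (exists D : set X, countable D /\ dense D) -> nbhs 0 U -> directed_by le ->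
  (forall j, CU U (Fs j)) -> F `<=` polar U -> wH_lim le Fs F -> F `<=` Li le Fs.
Proof.
move=> Kapprox Karchi Xsep U0 Jdir FsCU Fpolar FsF t Ft.
have JF := eventually_in_filter Jdir.
have pt := Fpolar t Ft.
have [e edense] := separable_dense_seq 0 Xsep.
have /choice [s sP] : forall j, exists s, Fs j s /\
    forall n, (exists2 s', Fs j s' & close_on e n s' t) -> close_on e n s t.
  move=> j; have [Fsj0 _ Fsjcl Fsjpolar] := FsCU j.
  exact: (close_on_select Karchi U0 edense Fsj0 Fsjcl Fsjpolar pt).
exists s; split; first by have [[j0 _] _ _ _] := Jdir; exists j0 => j _; exact: (sP j).1.
split; first exact: pt.1.
apply/(pointwise_cvgP _ _) => x; apply/cvgrPdist_lt => eps eps0.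
have [N _ NP] := polar_close_on_dense x Karchi U0 edense eps0.
have [j0 j0P] := wH_lim_close_on e N Kapprox U0 Jdir FsCU FsF Ft pt.1.
exists j0 => j /j0P /(sP j).2 close /=.
have [_ _ _ Fsjpolar] := FsCU j.
by rewrite distrC; apply: (NP N (leqnn N)) => //; exact: Fsjpolar (sP j).1.
Qed.

Theorem wH_lim_Li_Ls U (J : Type) (le : J -> J -> Prop) (Fs : J -> set (X -> K)) F :
  convex_approximation K -> Num.archimedean_axiom K ->
  (exists D : set X, countable D /\ dense D) -> nbhs 0 U -> directed_by le ->
  (forall j, CU U (Fs j)) -> CU U F -> wH_lim le Fs F -> Li le Fs = F /\ Ls le Fs = F.
Proof.
move=> Kapprox Karchi Xsep U0 Jdir FsCU FCU FsF.
have Fs0 j : Fs j !=set0 by case: (FsCU j).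
have LsF := Ls_sub_wH_lim Kapprox U0 FCU FsF.
have [_ _ _ Fpolar] := FCU.
have FLi := wH_lim_sub_Li Kapprox Karchi Xsep U0 Jdir FsCU Fpolar FsF.
have LiLs := Li_sub_Ls Jdir Fs0.
by split; apply/seteqP; split => // t; [move/LiLs/LsF | move/FLi/LiLs].
Qed.

End WeakStar.

Theorem corollary3p18 (R : realType) (K : numFieldType)
  (HK : K = (R : numFieldType) \/ K = (R[i] : numFieldType))
  (X : topologicalLmodType K)
  (X_hausdorff : hausdorff_space X)
  (X_separable : exists D : set X, countable D /\ dense D)
  (dual_sep : forall x y : X, x <> y -> exists s, dual s /\ s x <> s y)
  (U : set X) (U0 : nbhs 0 U)
  (J : Type) (le : J -> J -> Prop) (Jdir : directed_by le)
  (Us : J -> set (X -> K)) (Us_CU : forall j, CU U (Us j))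
  (Hconv : exists F, CU U F /\ wH_lim le Us F) :
  Li le Us = Ls le Us /\ CU U (Li le Us) /\ wH_lim le Us (Li le Us).
Proof.
have [Kapprox Karchi] : convex_approximation K /\ Num.archimedean_axiom K.
  case: HK => ->; split.
  - exact: convex_approximation_real.
  - by move=> x; exists (Num.bound `|x|); rewrite archi_boundP.
  - exact: convex_approximation_complex.
  - exact: archimedean_complex.
have [F [FCU UsF]] := Hconv.
by have [-> ->] := wH_lim_Li_Ls Kapprox Karchi X_separable U0 Jdir Us_CU FCU UsF.
Qed.
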